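(* Let $L=L_1\times L_2$ where $L_1$ and $L_2$ are $C$-lattices, and let $n\ge1$. (1) $q_1$ is a quasi $n$-absorbing element of $L_1$ if and only if $(q_1,1_{L_2})$ is a quasi $n$-absorbing element of $L$. (2) $q_2$ is a quasi $n$-absorbing element of $L_2$ if and only if $(1_{L_1},q_2)$ is a quasi $n$-absorbing element of $L$.
   Context: A multiplicative lattice is a complete lattice with least element $0$ and compact greatest element $1$, equipped with a commutative, associative product that distributes over arbitrary joins and has $1$ as multiplicative identity. An element $a$ is compact if $a\le\bigvee_{\alpha\in I}a_\alpha$ implies $a\le\bigvee_{\alpha\in I_0}a_\alpha$ for some finite $I_0\subseteq I$. A $C$-lattice is a multiplicative lattice generated under joins by a multiplicatively closed set of compact elements. $L_1\times L_2$ carries the componentwise order and product. $a^0=1$. A proper element $q$ ($q<1$) of a multiplicative lattice $M$ is quasi $n$-absorbing if whenever $a^nb\le q$ for some compact $a,b\in M$, then $a^n\le q$ or $a^{n-1}b\le q$. *)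

From Stdlib Require Import List.

Record MLData := {
  car : Type;
  le : car -> car -> Prop;
  join : (car -> Prop) -> car;
  mul : car -> car -> car;
  zero : car;
  one : car
}.

Arguments le {_} _ _.
Arguments join {_} _.
Arguments mul {_} _ _.
Arguments zero {_}.
Arguments one {_}.

Definition ijoin {L : MLData} {I : Type} (f : I -> car L) : car L :=
  join (fun x => exists i, x = f i).

Definition compact {L : MLData} (a : car L) : Prop :=
  forall (I : Type) (f : I -> car L),
    le a (ijoin f) ->
    exists I0 : list I, le a (join (fun x => exists i, In i I0 /\ x = f i)).

Definition is_mult_lattice (L : MLData) : Prop :=
  (forall x : car L, le x x) /\
  (forall x y : car L, le x y -> le y x -> x = y) /\
  (forall x y z : car L, le x y -> le y z -> le x z) /\
  (forall (S : car L -> Prop) x, S x -> le x (join S)) /\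
  (forall (S : car L -> Prop) u, (forall x, S x -> le x u) -> le (join S) u) /\
  (forall x : car L, le zero x) /\
  (forall x : car L, le x one) /\
  compact (one : car L) /\
  (forall x y : car L, mul x y = mul y x) /\
  (forall x y z : car L, mul x (mul y z) = mul (mul x y) z) /\
  (forall x : car L, mul one x = x) /\
  (forall (a : car L) (S : car L -> Prop),
     mul a (join S) = join (fun y => exists s, S s /\ y = mul a s)).

Definition is_C_lattice (L : MLData) : Prop :=
  is_mult_lattice L /\
  exists C : car L -> Prop,
    (forall c, C c -> compact c) /\
    (C one /\ forall c d, C c -> C d -> C (mul c d)) /\
    (forall x : car L, exists S : car L -> Prop,
        (forall s, S s -> C s) /\ x = join S).

Definition prodML (L1 L2 : MLData) : MLData := {|
  car := (car L1 * car L2)%type;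
  le := fun p q => le (fst p) (fst q) /\ le (snd p) (snd q);
  join := fun S => (join (fun x => exists y, S (x, y)),
                    join (fun y => exists x, S (x, y)));
  mul := fun p q => (mul (fst p) (fst q), mul (snd p) (snd q));
  zero := (zero, zero);
  one := (one, one)
|}.

Fixpoint mpow {L : MLData} (n : nat) (a : car L) : car L :=
  match n with
  | O => one
  | S k => mul a (mpow k a)
  end.

Definition quasi_n_absorbing {L : MLData} (n : nat) (q : car L) : Prop :=
  (le q one /\ q <> one) /\
  forall a b : car L, compact a -> compact b ->
    le (mul (mpow n a) b) q ->
    le (mpow n a) q \/ le (mul (mpow (n - 1) a) b) q.

(* In L1 x L2 the order and the product are componentwise, and an element
   (a, b) is compact exactly when both a and b are.  So a compact test pair
   ((a, b), (c, d)) for (q1, 1) is a compact test pair (a, c) for q1 in the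
   first component, and the second component imposes nothing since every
   element lies below 1; conversely (a, 0) and (c, 0) lift a test pair for q1.
   The statement about (1, q2) follows from the one about (q1, 1) by swapping
   the factors. *)
From Stdlib Require Import List.

Section MultLatticeFacts.
Variable L : MLData.
Hypothesis HL : is_mult_lattice L.

Lemma ml_refl (x : car L) : le x x.
Proof. destruct HL as [h _]. apply h. Qed.

Lemma ml_trans (x y z : car L) : le x y -> le y z -> le x z.
Proof. destruct HL as [_ [_ [h _]]]. apply h. Qed.

Lemma ml_join_ub (S : car L -> Prop) x : S x -> le x (join S).
Proof. destruct HL as [_ [_ [_ [h _]]]]. apply h. Qed.

Lemma ml_join_least (S : car L -> Prop) u :
  (forall x, S x -> le x u) -> le (join S) u.
Proof. destruct HL as [_ [_ [_ [_ [h _]]]]]. apply h. Qed.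

Lemma ml_zero_le (x : car L) : le zero x.
Proof. destruct HL as [_ [_ [_ [_ [_ [h _]]]]]]. apply h. Qed.

Lemma ml_le_one (x : car L) : le x one.
Proof. destruct HL as [_ [_ [_ [_ [_ [_ [h _]]]]]]]. apply h. Qed.

Lemma ml_join_mono (S T : car L -> Prop) :
  (forall x, S x -> T x) -> le (join S) (join T).
Proof.
  intros ST. apply ml_join_least. intros x Sx. apply ml_join_ub. auto.
Qed.

End MultLatticeFacts.

Fixpoint somes {I : Type} (l : list (option I)) : list I :=
  match l with
  | nil => nil
  | None :: r => somes r
  | Some i :: r => i :: somes r
  end.

Lemma in_somes {I : Type} (l : list (option I)) (i : I) :
  In (Some i) l -> In i (somes l).
Proof.
  induction l as [|[j|] r IH]; simpl; intros H; [contradiction| |].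
  - destruct H as [H|H]; [left; congruence | right; auto].
  - destruct H as [H|H]; [discriminate | auto].
Qed.

Lemma mpow_prod (L1 L2 : MLData) (n : nat) (a : car L1) (b : car L2) :
  @mpow (prodML L1 L2) n (a, b) = (mpow n a, mpow n b).
Proof. induction n as [|n IH]; simpl; [reflexivity | rewrite IH; reflexivity]. Qed.

Section ProductCompact.
Variables L1 L2 : MLData.
Hypothesis H1 : is_mult_lattice L1.
Hypothesis H2 : is_mult_lattice L2.

Lemma compact_fst (a : car L1) (b : car L2) :
  @compact (prodML L1 L2) (a, b) -> compact a.
Proof.
  intros Cab I f a_le.
  (* Cover (a, b) by the family (f i, 1) together with one extra member (0, b). *)
  set (g := fun o : option I =>
              match o with None => (zero, b) | Some i => (f i, one) end
            : car (prodML L1 L2)).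
  destruct (Cab (option I) g) as [I0 [HI0 _]].
  { split; simpl.
    - apply (ml_trans _ H1 _ _ _ a_le), ml_join_mono; auto.
      intros x [i ->]. exists one, (Some i). reflexivity.
    - apply ml_join_ub; auto. exists zero, None. reflexivity. }
  exists (somes I0). simpl in HI0.
  apply (ml_trans _ H1 _ _ _ HI0), ml_join_least; auto.
  intros x [y [[i|] [Hi Heq]]]; simpl in Heq.
  - apply ml_join_ub; auto. exists i. split; [apply in_somes; auto | congruence].
  - injection Heq as -> _. apply ml_zero_le; auto.
Qed.

Lemma compact_pair_zero (a : car L1) :
  compact a -> @compact (prodML L1 L2) (a, zero).
Proof.
  intros Ca I f [a_le _]. simpl in a_le.
  destruct (Ca I (fun i => fst (f i))) as [I0 HI0].
  { apply (ml_trans _ H1 _ _ _ a_le), ml_join_mono; auto.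
    intros x [y [i Hi]]. exists i. rewrite <- Hi. reflexivity. }
  exists I0. split; simpl; [| apply ml_zero_le; auto].
  apply (ml_trans _ H1 _ _ _ HI0), ml_join_mono; auto.
  intros x [i [Hi ->]]. exists (snd (f i)), i. split; auto.
  destruct (f i); reflexivity.
Qed.

Lemma compact_swap (a : car L1) (b : car L2) :
  @compact (prodML L1 L2) (a, b) -> @compact (prodML L2 L1) (b, a).
Proof.
  intros Cab I g [b_le a_le]. simpl in a_le, b_le.
  destruct (Cab I (fun i => (snd (g i), fst (g i)))) as [I0 [HI0a HI0b]].
  { split; simpl.
    - apply (ml_trans _ H1 _ _ _ a_le), ml_join_mono; auto.
      intros x [y [i Hi]]. exists (fst (g i)), i. rewrite <- Hi. reflexivity.
    - apply (ml_trans _ H2 _ _ _ b_le), ml_join_mono; auto.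
      intros x [y [i Hi]]. exists (snd (g i)), i. rewrite <- Hi. reflexivity. }
  exists I0. simpl in HI0a, HI0b. split; simpl.
  - apply (ml_trans _ H2 _ _ _ HI0b), ml_join_mono; auto.
    intros x [y [i [Hi Heq]]]. exists (snd (g i)), i. split; auto.
    injection Heq as -> ->. destruct (g i); reflexivity.
  - apply (ml_trans _ H1 _ _ _ HI0a), ml_join_mono; auto.
    intros x [y [i [Hi Heq]]]. exists (fst (g i)), i. split; auto.
    injection Heq as -> ->. destruct (g i); reflexivity.
Qed.

End ProductCompact.

Section ProductQuasiAbsorbing.
Variables L1 L2 : MLData.
Hypothesis H1 : is_mult_lattice L1.
Hypothesis H2 : is_mult_lattice L2.
Variable n : nat.

Lemma quasi_n_absorbing_swap (x : car L1) (y : car L2) :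
  @quasi_n_absorbing (prodML L1 L2) n (x, y) ->
  @quasi_n_absorbing (prodML L2 L1) n (y, x).
Proof.
  intros [[[x_le y_le] xy_ne] Qxy]. split.
  - split; [split; assumption |].
    intros E. apply xy_ne. simpl in E |- *. congruence.
  - intros [a b] [c d] Cab Ccd. rewrite !mpow_prod. simpl.
    intros [ac_le bd_le].
    assert (Cba : @compact (prodML L1 L2) (b, a)) by (apply compact_swap; auto).
    assert (Cdc : @compact (prodML L1 L2) (d, c)) by (apply compact_swap; auto).
    assert (bd_le' : le (mul (@mpow (prodML L1 L2) n (b, a)) (d, c)) (x, y))
      by (rewrite mpow_prod; split; assumption).
    destruct (Qxy _ _ Cba Cdc bd_le') as [h | h];
      rewrite mpow_prod in h; destruct h; [left | right]; split; assumption.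
Qed.

Lemma quasi_n_absorbing_pair_one (q : car L1) :
  quasi_n_absorbing n q <-> @quasi_n_absorbing (prodML L1 L2) n (q, one).
Proof.
  split.
  - intros [[q_le q_ne] Qq]. split.
    + split; [split; [exact q_le | apply ml_refl; auto] |].
      intros E. apply q_ne. injection E as E. exact E.
    + intros [a b] [c d] Cab Ccd. rewrite !mpow_prod. intros [ac_le _]. simpl in ac_le.
      destruct (Qq a c (compact_fst L1 L2 H1 H2 a b Cab) (compact_fst L1 L2 H1 H2 c d Ccd)
                  ac_le) as [h | h];
        [left | right]; split; simpl; auto; apply ml_le_one; auto.
  - intros [[[q_le _] q1_ne] Qq]. split.
    + split; [exact q_le |]. intros E. apply q1_ne. simpl. congruence.
    + intros a c Ca Cc ac_le.
      assert (ac_le' : le (mul (@mpow (prodML L1 L2) n (a, zero)) (c, zero)) (q, one))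
        by (rewrite mpow_prod; split; [exact ac_le | apply ml_le_one; auto]).
      destruct (Qq _ _ (compact_pair_zero L1 L2 H1 H2 a Ca)
                  (compact_pair_zero L1 L2 H1 H2 c Cc) ac_le') as [h | h];
        rewrite mpow_prod in h; destruct h; [left | right]; assumption.
Qed.

End ProductQuasiAbsorbing.

Theorem mainTheorem12 (L1 L2 : MLData) (n : nat) :
  is_C_lattice L1 -> is_C_lattice L2 -> 1 <= n ->
  (forall q1 : car L1,
     quasi_n_absorbing n q1 <->
     @quasi_n_absorbing (prodML L1 L2) n (q1, one)) /\
  (forall q2 : car L2,
     quasi_n_absorbing n q2 <->
     @quasi_n_absorbing (prodML L1 L2) n (one, q2)).
Proof.
  intros [H1 _] [H2 _] _. split; intros q.
  - exact (quasi_n_absorbing_pair_one L1 L2 H1 H2 n q).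
  - rewrite (quasi_n_absorbing_pair_one L2 L1 H2 H1 n q).
    split; apply quasi_n_absorbing_swap; assumption.
Qed.
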